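(* Let $T$ be a real inner product space of dimension $n > 4$ and let $\mathcal{R}$ be the space of algebraic curvature tensors on $T$. Then the image of the quadratic map $\rho: S^3 T^* \to \Lambda^2 T^* \otimes \Lambda^2 T^*$, $\rho(A)_{ijkl} = -g^{ab} A_{ika}A_{jlb} + g^{ab} A_{ila}A_{jkb}$, is not all of $\mathcal{R}$. Consequently the requirement that the Riemann curvature tensor at each point lies in the image of $\rho$, which is necessary for a metric $g$ of dimension $n>4$ to be a Hessian metric, is a non-trivial condition.
   Context: A Riemannian metric $g$ is Hessian if around each point there are local coordinates $x$ and a function $\phi$ with $g_{ij} = \partial^2 \phi/\partial x_i\partial x_j$. It is known that if $g$ is Hessian, with dually flat connection $\overline{\nabla} = \nabla + A$ ($\nabla$ the Levi-Civita connection), then $A$ (with indices lowered by $g$) lies in $S^3T^*$ and the Riemann curvature satisfies $R_{ijkl} = -g^{ab}A_{ika}A_{jlb} + g^{ab}A_{ila}A_{jkb}$, i.e. $R = \rho(A)$ at each point. An algebraic curvature tensor is an element of $\Lambda^2T^*\otimes\Lambda^2T^*$ that is symmetric under exchange of the two pairs and satisfies the first Bianchi identity; $\dim\mathcal{R} = n^2(n^2-1)/12$. *)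

(* T = R^n (coordinates w.r.t. an arbitrary basis), with the
   inner product given by a symmetric positive-definite Gram matrix g. *)
From mathcomp Require Import all_boot all_order all_algebra.
From mathcomp Require Import reals.
Set Implicit Arguments. Unset Strict Implicit. Unset Printing Implicit Defensive.
Import Order.TTheory GRing.Theory Num.Theory.
Local Open Scope ring_scope.

Definition tensor3 (R : Type) (n : nat) := 'I_n -> 'I_n -> 'I_n -> R.
Definition tensor4 (R : Type) (n : nat) := 'I_n -> 'I_n -> 'I_n -> 'I_n -> R.

Definition inner_product {R : numDomainType} {n : nat} (g : 'M[R]_n) : Prop :=
  g^T = g /\ (forall v : 'rV[R]_n, v != 0 -> 0 < (v *m g *m v^T) 0 0).

Definition sym3 {R : Type} {n : nat} (A : tensor3 R n) : Prop :=
  (forall i j k, A i j k = A j i k) /\ (forall i j k, A i j k = A i k j).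

Definition rho {R : fieldType} {n : nat} (g : 'M[R]_n) (A : tensor3 R n)
  : tensor4 R n :=
  fun i j k l =>
    - (\sum_(a < n) \sum_(b < n) (invmx g) a b * A i k a * A j l b)
    + (\sum_(a < n) \sum_(b < n) (invmx g) a b * A i l a * A j k b).

Definition alg_curv {R : pzRingType} {n : nat} (Rm : tensor4 R n) : Prop :=
  [/\ (forall i j k l, Rm i j k l = - Rm j i k l),
      (forall i j k l, Rm i j k l = - Rm i j l k),
      (forall i j k l, Rm i j k l = Rm k l i j) &
      (forall i j k l, Rm i j k l + Rm j k i l + Rm k i j l = 0)].

From HB Require Import structures.
From mathcomp Require Import all_boot all_order all_algebra.
From mathcomp Require Import reals.
From mathcomp Require Import zify ring mpoly.
Set Implicit Arguments. Unset Strict Implicit. Unset Printing Implicit Defensive.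
Import GRing.Theory Num.Theory.

(* The components of [rho g A] are homogeneous quadratic polynomials in the
   C(n+2,3) independent components A_ijk (i <= j <= k) of a totally symmetric A.
   The components R_abab (a < b) and R_ijkj (i < k, j distinct from i and k) are
   C(n,2) + 3 C(n,3) linearly independent functions on algebraic curvature
   tensors, a dual family being given by the Kulkarni-Nomizu products E_aa.E_bb
   and (E_ik + E_ki).E_jj.  For n > 4 there are more of the latter, and a
   homogeneous polynomial map from R^m to R^N with m < N is never onto: for large
   d the forms of degree d on R^N outnumber those of degree 2d on R^m, so some
   nonzero form vanishes on the image, whereas it does not vanish everywhere. *)

Lemma bin_mul_leq e d k : (0 < e)%N -> ('C(e * d + k, k) <= e ^ k * 'C(d + k, k))%N.
Proof.
move=> e_gt0; elim: k => [|k IHk]; first by rewrite !bin0.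
rewrite -(leq_pmul2l (ltn0Sn k)) !addnS -!mul_bin_diag /=.
have lin : ((e * d + k).+1 <= e * (d + k).+1)%N by nia.
apply: leq_trans (leq_mul lin IHk) _.
by rewrite [in X in (_ <= X)%N]mulnCA -mul_bin_diag expnS /=; lia.
Qed.

Lemma bin_lt_bin_succ e d m : (0 < e)%N -> (m.+1 * e ^ m < d + m.+1)%N ->
  ('C(e * d + m, m) < 'C(d + m.+1, m.+1))%N.
Proof.
move=> e_gt0 d_large; rewrite -(ltn_pmul2l (ltn0Sn m)) -mul_bin_diag addnS /=.
have C_gt0 : (0 < 'C(d + m, m))%N by rewrite bin_gt0 leq_addl.
apply: leq_ltn_trans (_ : m.+1 * (e ^ m * 'C(d + m, m)) < _)%N.
  by rewrite leq_pmul2l // bin_mul_leq.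
by rewrite mulnA ltn_pmul2r // -addnS.
Qed.

Lemma bin_addC a b : 'C(a + b, a) = 'C(a + b, b).
Proof. by rewrite -[RHS]bin_sub ?leq_addl // addnK. Qed.

Section IndexSets.
Variable n : nat.

Definition triples_le := [set t : 'I_n * 'I_n * 'I_n | t.1.1 <= t.1.2 <= t.2].
Definition pairs_lt := [set t : 'I_n * 'I_n | t.1 < t.2].
Definition triples_off :=
  [set t : 'I_n * 'I_n * 'I_n | [&& t.1.1 < t.1.2, t.2 != t.1.1 & t.2 != t.1.2]].

Lemma card_triples_le :
  #|triples_le| <= #|[set t : 3.-tuple 'I_n | sorted leq (map val t)]|.
Proof.
pose f (t : 'I_n * 'I_n * 'I_n) := [tuple t.1.1; t.1.2; t.2].
have f_inj : injective f.
  by move=> [[a b] c] [[a' b'] c'] /(congr1 val) /= [-> -> ->].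
rewrite -(card_imset _ f_inj); apply/subset_leq_card/subsetP => _ /imsetP[t + ->].
by rewrite !inE /= => /andP[-> ->].
Qed.

Lemma tuple2P (T : Type) (t : 2.-tuple T) : exists a b, t = [tuple a; b].
Proof. by case: t => [[|a [|b []]]] // t2; exists a, b; apply: val_inj. Qed.

Lemma tuple3P (T : Type) (t : 3.-tuple T) : exists a b c, t = [tuple a; b; c].
Proof. by case: t => [[|a [|b [|c []]]]] // t3; exists a, b, c; apply: val_inj. Qed.

Lemma card_pairs_lt : #|[set t : 2.-tuple 'I_n | sorted ltn (map val t)]| <= #|pairs_lt|.
Proof.
pose f (t : 2.-tuple 'I_n) := (thead t, tnth t (inord 1)).
have f_inj : injective f.
  move=> t t'; have [a [b ->]] := tuple2P t; have [a' [b' ->]] := tuple2P t'.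
  by rewrite /f /thead !(tnth_nth a) /= inordK // => -[-> ->].
rewrite -(card_imset _ f_inj); apply/subset_leq_card/subsetP => _ /imsetP[t + ->].
have [a [b ->]] := tuple2P t; rewrite !inE /f /thead !(tnth_nth a) /= inordK //.
by rewrite andbT.
Qed.

Lemma card_triples_off :
  3 * #|[set t : 3.-tuple 'I_n | sorted ltn (map val t)]| <= #|triples_off|.
Proof.
set S := [set t : 3.-tuple 'I_n | _].
pose place (i : 'I_3) (a b c : 'I_n) :=
  if val i == 0 then (a, b, c) else if val i == 1 then (a, c, b) else (b, c, a).
pose f (p : 'I_3 * 3.-tuple 'I_n) :=
  place p.1 (tnth p.2 ord0) (tnth p.2 (inord 1)) (tnth p.2 (inord 2)).
have S_tuple t : t \in S -> exists a b c, [/\ t = [tuple a; b; c], a < b & b < c].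
  have [a [b [c ->]]] := tuple3P t; rewrite inE /= andbT => /andP[ab bc].
  by exists a, b, c.
have fE i a b c : f (i, [tuple a; b; c]) = place i a b c.
  by rewrite /f !(tnth_nth a) /= !inordK.
have f_inj : {in setX [set: 'I_3] S &, injective f}.
{ move=> [i t] [i' t'] /setXP[_ /S_tuple[a [b [c [-> ab bc]]]]].
  move=> /setXP[_ /S_tuple[a' [b' [c' [-> ab' bc']]]]]; rewrite !fE.
  have ord3 (j : 'I_3) : [\/ j = ord0, j = inord 1 | j = inord 2].
    by case: j => [[|[|[|]]]] // ?; [apply: Or31 | apply: Or32 | apply: Or33];
      apply: val_inj; rewrite /= ?inordK.
  case: (ord3 i) => ->; case: (ord3 i') => ->; rewrite /place /= ?inordK //.
  all: move=> [e1 e2 e3]; first [by subst | exfalso].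
  all: move: e1 e2 e3 => /(congr1 (@nat_of_ord _)) e1 /(congr1 (@nat_of_ord _)) e2.
  all: by move=> /(congr1 (@nat_of_ord _)); lia. }
have -> : 3 * #|S| = #|setX [set: 'I_3] S| by rewrite cardsX cardsT card_ord.
rewrite -(card_in_imset f_inj); apply/subset_leq_card/subsetP => _ /imsetP[[i t] + ->].
move=> /setXP[_ /S_tuple[a [b [c [-> ab bc]]]]].
rewrite fE inE /place /=; case: ifP => _; last case: ifP => _.
all: by rewrite -!val_eqE /=; lia.
Qed.
End IndexSets.

Lemma binomial_count_lt n :
  4 <= n -> 'C(3 + n, 3) < 'C(n.+1, 2) + 3 * 'C(n.+1, 3).
Proof.
case: n => // n n_ge4; have := bin_ffact (3 + n.+1) 3; have := bin_ffact n.+2 2.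
have := bin_ffact n.+2 3; rewrite !ffactnS !ffactn0 /= !factS fact0.
have : (3 + n.+1) * (2 + n.+1) * (1 + n.+1) < 3 * ((n.+2 * n.+1) + (n.+2 * n.+1 * n)) by nia.
lia.
Qed.

Lemma card_triples_le_lt n :
  4 < n -> #|triples_le n| < #|pairs_lt n| + #|triples_off n|.
Proof.
case: n => // n n_gt4; apply: leq_ltn_trans (card_triples_le _) _.
rewrite card_sorted_tuples; apply: leq_trans (binomial_count_lt n_gt4) _.
apply: leq_add.
  by rewrite -(card_ltn_sorted_tuples 2 n.+1) card_pairs_lt.
by rewrite -(card_ltn_sorted_tuples 3 n.+1) card_triples_off.
Qed.

Local Open Scope ring_scope.

Local Notation widen := (widen_ord (leqnSn _)).

Section MUni.
Variables (R : comNzRingType) (k : nat).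

Lemma widen_lift_max (i : 'I_k) : widen i = lift ord_max i.
Proof. by apply/val_inj; rewrite /= /bump leqNgt ltn_ord. Qed.

Lemma muni_meval (p : {mpoly R[k.+1]}) (v : 'I_k.+1 -> R) :
  p.@[v] = (map_poly (meval (fun i => v (widen i))) (muni p)).[v ord_max].
Proof.
rewrite muniE mevalE raddf_sum horner_sum; apply: eq_bigr => m _ /=.
rewrite map_polyZ /= map_polyXn hornerZ hornerXn mevalZ mevalX big_ord_recr /=.
by rewrite -mulrA; congr (_ * (_ * _)); apply: eq_bigr => i _; rewrite mnmE.
Qed.

Lemma mcoeff_muni (p : {mpoly R[k.+1]}) (m : 'X_{1.. k.+1}) :
  ((muni p)`_(m ord_max))@_[multinom m (widen i) | i < k] = p@_m.
Proof.
rewrite [in RHS](mpolyE p) muniE coef_sum !raddf_sum /=; apply: eq_bigr => m' _.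
rewrite coefZ coefXn mcoeffZ mcoeffX.
have [e|ne] := eqVneq (m' ord_max) (m ord_max); last first.
  rewrite mulr0 mcoeff0; case: eqP => [m'_eq|_]; last by rewrite mulr0.
  by rewrite m'_eq eqxx in ne.
rewrite mulr1 mcoeffZ mcoeffX; congr (_ * (nat_of_bool _)%:R).
apply/eqP/eqP => [/mnmP eq_m|-> //]; apply/mnmP => i.
have [j ->|->] := unliftP ord_max i; last by rewrite e.
by have := eq_m j; rewrite !mnmE widen_lift_max.
Qed.

Lemma muni_eq0 (p : {mpoly R[k.+1]}) : (muni p == 0) = (p == 0).
Proof.
apply/eqP/eqP; last by move=> ->; exact: muni0.
by move=> p0; apply/mpolyP => m; rewrite -mcoeff_muni p0 coef0 !mcoeff0.
Qed.
End MUni.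

Section Nonvanishing.
Variable R : numDomainType.

Lemma exists_horner_neq0 (q : {poly R}) : q != 0 -> exists t, q.[t] != 0.
Proof.
move=> q_neq0; pose s : seq R := [seq i%:R | i <- iota 0 (size q)].
have [/hasP[t _ qt_neq0]|/hasPn s_roots] := boolP (has (fun t => q.[t] != 0) s).
  by exists t.
suff q0 : q = 0 by rewrite q0 eqxx in q_neq0.
apply: (@roots_geq_poly_eq0 _ q s); last by rewrite size_map size_iota.
  by apply/allP => t /s_roots; rewrite negbK.
by rewrite map_inj_uniq ?iota_uniq // => i j /eqP; rewrite eqr_nat => /eqP.
Qed.

Lemma exists_meval_neq0 k (p : {mpoly R[k]}) : p != 0 -> exists v, p.@[v] != 0.
Proof.
elim: k p => [|k IHk] p p_neq0.
  exists (fun _ => 0); rewrite (nvar0_mpolyC p) mevalC.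
  by rewrite (nvar0_mpolyC p) mpolyC_eq0 in p_neq0.
have : lead_coef (muni p) != 0 by rewrite lead_coef_eq0 muni_eq0.
move=> /IHk[v lc_neq0]; pose q := map_poly (meval v) (muni p).
have q_neq0 : q != 0.
  apply: contraNneq lc_neq0 => q0.
  by rewrite /lead_coef -(coef_map (meval v)) -/q q0 coef0.
have [t qt_neq0] := exists_horner_neq0 q_neq0.
exists (fun i => if unlift ord_max i is Some j then v j else t).
rewrite muni_meval unlift_none (@eq_map_poly _ _ _ (meval v)) // => r.
by apply: meval_eq => i; rewrite widen_lift_max liftK.
Qed.
End Nonvanishing.

Section Annihilator.
Variables (R : fieldType) (m N e d : nat) (F : 'I_N.+1 -> {mpoly R[m.+1]}).
Hypothesis F_homog : forall i, F i \is e.-homog.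
Let lF := [tuple F i | i < N.+1].

Lemma prod_pow_homog (mu : 'X_{1..N.+1}) (r : seq 'I_N.+1) :
  \prod_(i <- r) tnth lF i ^+ mu i \is (\sum_(i <- r) e * mu i)%N.-homog.
Proof.
elim: r => [|i r IHr]; first by rewrite !big_nil dhomog1.
by rewrite !big_cons; apply: dhomogM IHr; rewrite tnth_mktuple dhomogMn.
Qed.

Lemma comp_mpoly_homog (p : {mpoly R[N.+1]}) :
  p \is d.-homog -> p \mPo lF \is (e * d)%N.-homog.
Proof.
move=> p_homog; rewrite comp_mpolyE big_seq; apply: rpred_sum => mu mu_supp.
have := prod_pow_homog mu (index_enum _).
by rewrite -big_distrr /= -mdegE (dhomog_mf p_homog mu_supp); apply: rpredZ.
Qed.

Definition comp_dhomog (P : dhomog N.+1 R d) : dhomog m.+1 R (e * d) :=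
  indhomog (e * d) (mpoly_of_dhomog P \mPo lF).

Lemma comp_dhomogE P : mpoly_of_dhomog (comp_dhomog P) = mpoly_of_dhomog P \mPo lF.
Proof. by rewrite /comp_dhomog /indhomog insubdK // comp_mpoly_homog ?dhomog_is_dhomog. Qed.

Lemma comp_dhomog_is_linear : linear comp_dhomog.
Proof.
move=> a P Q; apply: val_inj => /=.
by rewrite comp_dhomogE linearP /= [RHS]raddfD [X in _ = X + _]linearZ /= !comp_dhomogE.
Qed.

HB.instance Definition _ := GRing.isLinear.Build R (dhomog N.+1 R d)
  (dhomog m.+1 R (e * d)) *:%R comp_dhomog comp_dhomog_is_linear.

Lemma exists_annihilating_mpoly : ('C(e * d + m, e * d) < 'C(d + N, d))%N ->
  exists2 p : {mpoly R[N.+1]}, p != 0 & p \mPo lF = 0.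
Proof.
move=> dim_lt; pose f := linfun comp_dhomog.
have dim_img : (\dim (limg f) <= 'C(e * d + m, e * d))%N.
  by rewrite -[X in (_ <= X)%N](dimvf (dhomog m.+1 R (e * d))) dimvS ?subvf.
have : (0 < \dim (lker f))%N.
  have := limg_ker_dim f fullv; rewrite capfv dimvf /dim /=; lia.
rewrite lt0n dimv_eq0 => ker_neq0.
exists (mpoly_of_dhomog (vpick (lker f))).
  by rewrite -[_ != 0]/(vpick (lker f) != 0) vpick0.
have : f (vpick (lker f)) = 0 by apply/eqP; rewrite -memv_ker memv_pick.
by move=> /(congr1 val); rewrite lfunE /= comp_dhomogE.
Qed.
End Annihilator.

Theorem homog_map_not_onto (R : numFieldType) m N e (F : 'I_N -> {mpoly R[m]}) :
  (m < N)%N -> (forall i, F i \is e.+1.-homog) ->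
  exists x : 'I_N -> R, forall y : 'I_m -> R, ~ (forall i, (F i).@[y] = x i).
Proof.
case: N F => [|N] F //; case: m F => [|m] F m_lt_N F_homog.
  exists (fun i => (F i).@[fun _ => 0] + 1) => y /(_ ord0).
  rewrite (@meval_eq _ _ y (fun _ => 0)) => [/(etrans (addr0 _))/addrI/eqP|[]//].
  by rewrite eq_sym oner_eq0.
pose d := (m.+1 * e.+1 ^ m)%N.
have dim_lt : ('C(e.+1 * d + m, e.+1 * d) < 'C(d + N, d))%N.
  rewrite bin_addC; apply: leq_trans (bin_lt_bin_succ _ _) _ => //.
    by rewrite -addSnnS ltn_addr // ltnS.
  by rewrite -bin_addC leq_bin2l // leq_add2l.
have [p p_neq0 p_annih] := exists_annihilating_mpoly F_homog dim_lt.
have [x px_neq0] := exists_meval_neq0 p_neq0.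
exists x => y Fy_eq_x; move: px_neq0.
rewrite (@meval_eq _ _ x (fun i => (tnth [tuple F i | i < N.+1] i).@[y])) => [|i].
  by rewrite -comp_mpoly_meval p_annih meval0 eqxx.
by rewrite tnth_mktuple Fy_eq_x.
Qed.

Section TestTensors.
Variables (R : comNzRingType) (n : nat).

Definition kulkarni_nomizu (h q : 'I_n -> 'I_n -> R) : tensor4 R n :=
  fun a b c d => h a c * q b d + h b d * q a c - h a d * q b c - h b c * q a d.

Lemma alg_curv_kulkarni_nomizu h q : (forall a b, h a b = h b a) ->
  (forall a b, q a b = q b a) -> alg_curv (kulkarni_nomizu h q).
Proof.
move=> h_sym q_sym; split => a b c d; rewrite /kulkarni_nomizu.
- ring.
- ring.
- rewrite (h_sym c a) (q_sym d b) (h_sym d b) (q_sym c a) (h_sym c b) (q_sym d a).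
  by rewrite (h_sym d a) (q_sym c b); ring.
- by rewrite (h_sym b a) (q_sym b a) (h_sym c b) (q_sym c b) (h_sym c a) (q_sym c a); ring.
Qed.

Lemma alg_curv_lincomb (I : finType) (T : I -> tensor4 R n) (x : I -> R) :
  (forall s, alg_curv (T s)) ->
  alg_curv (fun a b c d => \sum_s x s * T s a b c d).
Proof.
move=> T_curv; split => a b c d.
- by rewrite -sumrN; apply: eq_bigr => s _; case: (T_curv s) => -> *; rewrite mulrN.
- by rewrite -sumrN; apply: eq_bigr => s _; case: (T_curv s) => _ -> *; rewrite mulrN.
- by apply: eq_bigr => s _; case: (T_curv s) => _ _ -> _.
- rewrite -!big_split; apply: big1 => s _; case: (T_curv s) => _ _ _ bianchi.
  by rewrite /= -!mulrDr bianchi mulr0.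
Qed.

Definition unit_form (u v : 'I_n) (a b : 'I_n) : R := ((a == u) && (b == v))%:R.

Definition curv_pair (t : 'I_n * 'I_n) : tensor4 R n :=
  kulkarni_nomizu (unit_form t.1 t.1) (unit_form t.2 t.2).
Definition curv_triple (t : 'I_n * 'I_n * 'I_n) : tensor4 R n :=
  kulkarni_nomizu (fun a b => unit_form t.1.1 t.1.2 a b + unit_form t.1.2 t.1.1 a b)
    (unit_form t.2 t.2).

Definition coord_pair (t : 'I_n * 'I_n) (Rm : tensor4 R n) := Rm t.1 t.2 t.1 t.2.
Definition coord_triple (t : 'I_n * 'I_n * 'I_n) (Rm : tensor4 R n) :=
  Rm t.1.1 t.2 t.1.2 t.2.

Lemma indicator_sum4 (x1 y1 x2 y2 x3 y3 x4 y4 e : bool) :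
  x1 && y1 = e -> x2 && y2 = false -> x3 && y3 = false -> x4 && y4 = false ->
  x1%:R * y1%:R + x2%:R * y2%:R - x3%:R * y3%:R - x4%:R * y4%:R = e%:R :> R.
Proof. by rewrite -!natrM !mulnb => -> -> -> ->; rewrite !subr0 addr0. Qed.

Lemma indicator_sum8 (x1 x1' y1 x2 x2' y2 x3 x3' y3 x4 x4' y4 e : bool) :
  x1 && y1 = e -> x1' && y1 = false -> x2 && y2 = false -> x2' && y2 = false ->
  x3 && y3 = false -> x3' && y3 = false -> x4 && y4 = false -> x4' && y4 = false ->
  (x1%:R + x1'%:R) * y1%:R + (x2%:R + x2'%:R) * y2%:R
   - (x3%:R + x3'%:R) * y3%:R - (x4%:R + x4'%:R) * y4%:R = e%:R :> R.
Proof.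
by rewrite !mulrDl -!natrM !mulnb => -> -> -> -> -> -> -> ->; rewrite !addr0 !subr0.
Qed.

Ltac ord_bool := rewrite -?val_eqE /=; lia.

Lemma coord_pair_curv_pair t s : t \in pairs_lt n -> s \in pairs_lt n ->
  coord_pair t (curv_pair s) = (t == s)%:R.
Proof.
case: t s => [a b] [a' b']; rewrite !inE /= => ab ab'.
by rewrite /coord_pair /curv_pair /kulkarni_nomizu /unit_form /= xpair_eqE;
  apply: indicator_sum4; ord_bool.
Qed.

Lemma coord_pair_curv_triple t s : t \in pairs_lt n -> s \in triples_off n ->
  coord_pair t (curv_triple s) = 0.
Proof.
case: t s => [a b] [[i k] j]; rewrite !inE /= -!val_eqE /= => ab /and3P[ik ji jk].
rewrite /coord_pair /curv_triple /kulkarni_nomizu /unit_form /=.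
by rewrite -[0]/(false%:R); apply: indicator_sum8; ord_bool.
Qed.

Lemma coord_triple_curv_pair t s : t \in triples_off n -> s \in pairs_lt n ->
  coord_triple t (curv_pair s) = 0.
Proof.
case: t s => [[i k] j] [a b]; rewrite !inE /= -!val_eqE /= => /and3P[ik ji jk] ab.
rewrite /coord_triple /curv_pair /kulkarni_nomizu /unit_form /=.
by rewrite -[0]/(false%:R); apply: indicator_sum4; ord_bool.
Qed.

Lemma coord_triple_curv_triple t s : t \in triples_off n -> s \in triples_off n ->
  coord_triple t (curv_triple s) = (t == s)%:R.
Proof.
case: t s => [[i k] j] [[i' k'] j']; rewrite !inE /= -!val_eqE /=.
move=> /and3P[ik ji jk] /and3P[ik' ji' jk'].
rewrite /coord_triple /curv_triple /kulkarni_nomizu /unit_form /= !xpair_eqE.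
by apply: indicator_sum8; ord_bool.
Qed.
End TestTensors.

Local Notation curv_index n := ('I_#|pairs_lt n| + 'I_#|triples_off n|)%type.

Section CurvatureCoordinates.
Variables (R : comNzRingType) (n : nat).

Definition test_curv (u : curv_index n) : tensor4 R n :=
  match u with inl p => curv_pair R (enum_val p) | inr q => curv_triple R (enum_val q) end.

Definition curv_coord (u : curv_index n) (Rm : tensor4 R n) : R :=
  match u with inl p => coord_pair (enum_val p) Rm | inr q => coord_triple (enum_val q) Rm end.

Lemma curv_coord_test_curv u s : curv_coord u (test_curv s) = (s == u)%:R.
Proof.
case: u s => p [] p' /=.
- by rewrite coord_pair_curv_pair ?enum_valP // (inj_eq enum_val_inj) eq_sym.
- by rewrite coord_pair_curv_triple ?enum_valP.
- by rewrite coord_triple_curv_pair ?enum_valP.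
- by rewrite coord_triple_curv_triple ?enum_valP // (inj_eq enum_val_inj) eq_sym.
Qed.

Definition curv_of (x : curv_index n -> R) : tensor4 R n :=
  fun a b c d => \sum_s x s * test_curv s a b c d.

Lemma alg_curv_curv_of x : alg_curv (curv_of x).
Proof.
apply: alg_curv_lincomb => -[p|q]; apply: alg_curv_kulkarni_nomizu => a b.
all: by rewrite /unit_form ?(andbC (b == _)) // addrC.
Qed.

Lemma curv_coord_curv_of u x : curv_coord u (curv_of x) = x u.
Proof.
have -> : curv_coord u (curv_of x) = \sum_s x s * curv_coord u (test_curv s) by case: u.
rewrite (bigD1 u) //= curv_coord_test_curv eqxx mulr1 big1 ?addr0 // => s /negbTE s_neq_u.
by rewrite curv_coord_test_curv s_neq_u mulr0.
Qed.
End CurvatureCoordinates.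

Section SymmetricCoordinates.
Variable n : nat.

Definition sort3 (i j k : 'I_n) : 'I_n * 'I_n * 'I_n :=
  if (i <= j)%N then
    if (j <= k)%N then (i, j, k) else if (i <= k)%N then (i, k, j) else (k, i, j)
  else if (i <= k)%N then (j, i, k) else if (j <= k)%N then (j, k, i) else (k, j, i).

Lemma sort3_triples_le i j k : sort3 i j k \in triples_le n.
Proof. by rewrite /sort3; repeat case: ifP; rewrite inE /=; lia. Qed.

Lemma sym3_sort3 (T : Type) (A : tensor3 T n) i j k : sym3 A ->
  A (sort3 i j k).1.1 (sort3 i j k).1.2 (sort3 i j k).2 = A i j k.
Proof.
move=> [A12 A23]; rewrite /sort3; repeat case: ifP => _ /=.
all: first [ by [] | by rewrite A23 | by rewrite A12 | by rewrite A12 A23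
  | by rewrite A23 A12 | by rewrite A12 A23 A12 ].
Qed.
End SymmetricCoordinates.

Section RhoQuadratic.
Variables (R : fieldType) (n : nat).
Local Notation m := #|triples_le n.+1|.

Definition sym_index (i j k : 'I_n.+1) : 'I_m :=
  enum_rank_in (sort3_triples_le ord0 ord0 ord0) (sort3 i j k).

Definition sym_coords (A : tensor3 R n.+1) (r : 'I_m) : R :=
  A (enum_val r).1.1 (enum_val r).1.2 (enum_val r).2.

Lemma sym_coords_index A i j k : sym3 A -> sym_coords A (sym_index i j k) = A i j k.
Proof.
by move=> A_sym; rewrite /sym_coords /sym_index enum_rankK_in ?sort3_triples_le // sym3_sort3.
Qed.

Definition rho_mpoly (g : 'M[R]_n.+1) (i j k l : 'I_n.+1) : {mpoly R[m]} :=
  \sum_(a < n.+1) \sum_(b < n.+1) invmx g a b *: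
    (- ('X_(sym_index i k a) * 'X_(sym_index j l b))
     + 'X_(sym_index i l a) * 'X_(sym_index j k b)).

Lemma rho_mpoly_homog g i j k l : rho_mpoly g i j k l \is 2.-homog.
Proof.
have X_homog r : ('X_r : {mpoly R[m]}) \is 1.-homog by rewrite dhomogX; apply/eqP/mdeg1.
apply: rpred_sum => a _; apply: rpred_sum => b _; apply: rpredZ.
by apply: rpredD; rewrite ?dhomogN; apply: (dhomogM (X_homog _) (X_homog _)).
Qed.

Lemma rho_mpoly_meval g A i j k l : sym3 A ->
  (rho_mpoly g i j k l).@[sym_coords A] = rho g A i j k l.
Proof.
move=> A_sym; rewrite /rho_mpoly /rho raddf_sum -sumrN -big_split /=.
apply: eq_bigr => a _; rewrite raddf_sum -sumrN -big_split /=; apply: eq_bigr => b _.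
by rewrite mevalZ mevalD mevalN !mevalM !mevalXU !sym_coords_index //; ring.
Qed.

Definition rho_coord_mpoly (g : 'M[R]_n.+1) (u : curv_index n.+1) : {mpoly R[m]} :=
  match u with
  | inl p => let t := enum_val p in rho_mpoly g t.1 t.2 t.1 t.2
  | inr q => let t := enum_val q in rho_mpoly g t.1.1 t.2 t.1.2 t.2
  end.

Lemma rho_coord_mpoly_homog g u : rho_coord_mpoly g u \is 2.-homog.
Proof. by case: u => ?; apply: rho_mpoly_homog. Qed.

Lemma rho_coord_mpoly_meval g A u : sym3 A ->
  (rho_coord_mpoly g u).@[sym_coords A] = curv_coord u (rho g A).
Proof. by move=> A_sym; case: u => ? /=; rewrite rho_mpoly_meval. Qed.
End RhoQuadratic.

Theorem mainTheorem2 (R : realType) (n : nat) (g : 'M[R]_n) :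
  (4 < n)%N -> inner_product g ->
  exists Rm : tensor4 R n, alg_curv Rm /\
    forall A : tensor3 R n, sym3 A -> rho g A <> Rm.
Proof.
case: n g => [//|n] g n_gt4 _.
have dim_lt : (#|triples_le n.+1| < #|{: curv_index n.+1}|)%N.
  by rewrite card_sum !card_ord card_triples_le_lt.
have [x not_image] := homog_map_not_onto dim_lt
  (fun r => rho_coord_mpoly_homog g (enum_val r)).
exists (curv_of (fun u => x (enum_rank u))); split; first exact: alg_curv_curv_of.
move=> A A_sym rhoA; apply: (not_image (sym_coords A)) => r.
by rewrite rho_coord_mpoly_meval // rhoA curv_coord_curv_of enum_valK.
Qed.
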